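(* Let $N\ge 1$ be an integer and let $a(1),a(2),\dots$ be a sequence of real numbers such that $a(n+m)\le a(n)+a(m)$ holds for all integers $n,m$ with $N\le n\le m\le 2n$. Then $\lim_{n\to\infty} a(n)/n$ exists (possibly $-\infty$) and $$\lim_{n\to\infty}\frac{a(n)}{n}=\inf_{k\ge N}\frac{a(k)}{k}.$$ *)

From Stdlib Require Import Reals Lra Lia.
Open Scope R_scope.

Definition ratio_set (a : nat -> R) (N : nat) : R -> Prop :=
  fun x => exists k : nat, (N <= k)%nat /\ x = a k / INR k.

Definition is_lower_bound (E : R -> Prop) (m : R) : Prop :=
  forall x, E x -> m <= x.

Definition is_glb (E : R -> Prop) (m : R) : Prop :=
  is_lower_bound E m /\ (forall b, is_lower_bound E b -> b <= m).

Definition cv_minfty (u : nat -> R) : Prop :=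
  forall M : R, exists n0 : nat, forall n : nat, (n >= n0)%nat -> u n < M.

(* Fix k >= N and put c := a(k)/k.  The sequence b(n) := a(n) - c n satisfies the same restricted
   subadditivity and b(k) = 0.  Splitting j into halves shows b(jk) <= 0 for all j >= 1, and writing
   n = p + s with p a multiple of k and p <= s <= 2p shows that b is bounded above on [N, oo).
   Hence a(n)/n <= a(k)/k + C/n, so limsup a(n)/n <= a(k)/k for every k >= N, while
   a(n)/n >= inf_{k>=N} a(k)/k trivially. *)

From Stdlib Require Import Reals Lra Lia Classical Arith.
Open Scope R_scope.

Definition restricted_subadditive (N : nat) (b : nat -> R) : Prop :=
  forall n m : nat, (N <= n)%nat -> (n <= m)%nat -> (m <= 2 * n)%nat ->
    b (n + m)%nat <= b n + b m.

Lemma restricted_subadditive_sub_linear (N : nat) (b : nat -> R) (c : R) :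
  restricted_subadditive N b ->
  restricted_subadditive N (fun n => b n - c * INR n).
Proof.
  intros hsub n m hn hnm hm.
  rewrite plus_INR. pose proof (hsub n m hn hnm hm). lra.
Qed.

Lemma bounded_on_initial_segment (b : nat -> R) (T : nat) :
  exists C, forall n, (n <= T)%nat -> b n <= C.
Proof.
  induction T as [|T [C hC]].
  - exists (b 0%nat). intros n hn. replace n with 0%nat by lia. lra.
  - exists (Rmax C (b (S T))). intros n hn.
    destruct (Nat.eq_dec n (S T)) as [->|hne].
    + apply Rmax_r.
    + apply Rle_trans with C; [apply hC; lia | apply Rmax_l].
Qed.

Section RestrictedSubadditive.

Variables (N : nat) (b : nat -> R).
Hypothesis hN : (1 <= N)%nat.
Hypothesis hsub : restricted_subadditive N b.

Lemma nonpos_at_multiples (k : nat) : (N <= k)%nat -> b k <= 0 ->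
  forall j, (1 <= j)%nat -> b (j * k)%nat <= 0.
Proof.
  intros hk hbk.
  apply Nat.strong_right_induction. intros j hj IH.
  destruct (Nat.eq_dec j 1) as [->|hj1]; [rewrite Nat.mul_1_l; exact hbk|].
  pose proof (Nat.div_mod j 2 ltac:(lia)).
  pose proof (Nat.mod_upper_bound j 2 ltac:(lia)).
  set (j1 := (j / 2)%nat) in *.
  assert (hhalves : (1 <= j1 /\ j1 <= j - j1 <= 2 * j1)%nat) by lia.
  assert (hsplit : (j * k = j1 * k + (j - j1) * k)%nat) by nia.
  rewrite hsplit.
  apply Rle_trans with (b (j1 * k)%nat + b ((j - j1) * k)%nat); [apply hsub; nia|].
  assert (b (j1 * k)%nat <= 0) by (apply IH; lia).
  assert (b ((j - j1) * k)%nat <= 0) by (apply IH; lia).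
  lra.
Qed.

Lemma bounded_above_of_nonpos (k : nat) : (N <= k)%nat -> b k <= 0 ->
  exists C, forall n, (N <= n)%nat -> b n <= C.
Proof.
  intros hk hbk.
  destruct (bounded_on_initial_segment b (4 * k)) as [C hC].
  exists C. apply Nat.strong_right_induction. intros n hn IH.
  destruct (le_lt_dec n (4 * k)) as [hsmall|hlarge]; [now apply hC|].
  (* n = p + s with p = (n / 2k) k, so that p <= s < p + 2k <= 2p. *)
  pose proof (Nat.div_mod n (2 * k) ltac:(lia)).
  pose proof (Nat.mod_upper_bound n (2 * k) ltac:(lia)).
  set (j := (n / (2 * k))%nat) in *.
  assert (hj : (2 <= j)%nat) by nia.
  assert (hp : (2 * k <= j * k /\ 2 * (j * k) <= n < 2 * (j * k) + 2 * k)%nat) by nia.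
  set (p := (j * k)%nat) in *.
  replace n with (p + (n - p))%nat by lia.
  apply Rle_trans with (b p + b (n - p)%nat); [apply hsub; lia|].
  assert (b p <= 0) by (apply (nonpos_at_multiples k hk hbk); lia).
  assert (b (n - p)%nat <= C) by (apply IH; lia).
  lra.
Qed.

End RestrictedSubadditive.

Lemma div_INR_eventually_lt (C eps : R) : 0 < eps ->
  exists n0, forall n, (n0 <= n)%nat -> C / INR n < eps.
Proof.
  intros heps.
  destruct (INR_unbounded (C / eps)) as [n0 hn0].
  exists (S n0). intros n hn.
  assert (hle : INR (S n0) <= INR n) by (apply le_INR; exact hn).
  rewrite S_INR in hle.
  assert (hpos : 0 < INR n) by (pose proof (pos_INR n0); lra).
  apply Rmult_lt_reg_r with (INR n); [exact hpos|].
  unfold Rdiv. rewrite Rmult_assoc, Rinv_l by lra.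
  assert (hC : C < eps * INR n).
  { apply Rmult_lt_reg_r with (/ eps); [now apply Rinv_0_lt_compat|].
    rewrite (Rmult_comm eps), Rmult_assoc, Rinv_r by lra. unfold Rdiv in hn0. lra. }
  lra.
Qed.

Lemma ratio_eventually_lt (N : nat) (a : nat -> R) :
  (1 <= N)%nat -> restricted_subadditive N a ->
  forall k, (N <= k)%nat -> forall eps, 0 < eps ->
  exists n0, forall n, (n0 <= n)%nat -> (N <= n)%nat /\ a n / INR n < a k / INR k + eps.
Proof.
  intros hN hsub k hk eps heps.
  set (c := a k / INR k).
  assert (hk0 : 0 < INR k) by (apply lt_0_INR; lia).
  destruct (bounded_above_of_nonpos N (fun n => a n - c * INR n) hN
              (restricted_subadditive_sub_linear N a c hsub) k hk)
    as [C hC].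
  { unfold c. field_simplify; lra. }
  destruct (div_INR_eventually_lt C eps heps) as [n0 hn0].
  exists (max n0 N). intros n hn. split; [lia|].
  assert (hn0' : 0 < INR n) by (apply lt_0_INR; lia).
  specialize (hC n ltac:(lia)). specialize (hn0 n ltac:(lia)). simpl in hC.
  assert (a n / INR n <= c + C / INR n).
  { apply Rmult_le_reg_r with (INR n); [exact hn0'|].
    unfold Rdiv. rewrite Rmult_plus_distr_r, !Rmult_assoc, Rinv_l by lra. lra. }
  lra.
Qed.

Lemma glb_exists (E : R -> Prop) (lb x0 : R) :
  is_lower_bound E lb -> E x0 -> exists l, is_glb E l.
Proof.
  intros hlb hx0.
  destruct (completeness (fun y => E (- y))) as [m [hub hleast]].
  - exists (- lb). intros y hy. apply hlb in hy. lra.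
  - exists (- x0). now rewrite Ropp_involutive.
  - exists (- m). split.
    + intros x hx. assert (x' : E (- - x)) by now rewrite Ropp_involutive.
      apply hub in x'. lra.
    + intros l hl. assert (m <= - l); [|lra].
      apply hleast. intros y hy. apply hl in hy. lra.
Qed.

Lemma glb_approx (E : R -> Prop) (l eps : R) :
  is_glb E l -> 0 < eps -> exists x, E x /\ x < l + eps.
Proof.
  intros [_ hgreatest] heps. apply NNPP. intros hnone.
  assert (l + eps <= l); [|lra].
  apply hgreatest. intros x hx. apply Rnot_lt_le. intros hlt. apply hnone. now exists x.
Qed.

Theorem theorem2p1 (N : nat) (a : nat -> R) (hN : (1 <= N)%nat)
  (hsub : forall n m : nat, (N <= n)%nat -> (n <= m)%nat -> (m <= 2 * n)%nat ->
            a (n + m)%nat <= a n + a m) :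
  (exists l : R, is_glb (ratio_set a N) l /\ Un_cv (fun n => a n / INR n) l)
  \/
  ((forall M : R, exists x, ratio_set a N x /\ x < M) /\
   cv_minfty (fun n => a n / INR n)).
Proof.
  pose proof (ratio_eventually_lt N a hN hsub) as hbelow.
  destruct (classic (exists lb, is_lower_bound (ratio_set a N) lb)) as [[lb hlb]|hunb].
  - left.
    destruct (glb_exists _ lb (a N / INR N) hlb) as [l hl]; [now exists N|].
    exists l. split; [exact hl|]. intros eps heps.
    destruct (glb_approx _ l (eps / 2) hl) as [x [[k [hk ->]] hx]]; [lra|].
    destruct (hbelow k hk (eps / 2)) as [n0 hn0]; [lra|].
    exists n0. intros n hn. destruct (hn0 n hn) as [hNn hlt].
    assert (l <= a n / INR n) by (apply (proj1 hl); now exists n).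
    unfold R_dist. rewrite Rabs_right; lra.
  - right.
    assert (hsmall : forall M, exists x, ratio_set a N x /\ x < M).
    { intros M. apply NNPP. intros hnone. apply hunb. exists M.
      intros x hx. apply Rnot_lt_le. intros hlt. apply hnone. now exists x. }
    split; [exact hsmall|]. intros M.
    destruct (hsmall (M - 1)) as [x [[k [hk ->]] hx]].
    destruct (hbelow k hk 1) as [n0 hn0]; [lra|].
    exists n0. intros n hn. destruct (hn0 n hn). lra.
Qed.
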